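(* Let $(E,\mathcal L)$ be a simple affine oriented matroid satisfying (S): $|S(X,Y)|<\infty$ for all $X,Y\in\mathcal L$. Let $\pi$ be a parallelism class with its total order $<_\pi$. Then $(\pi,<_\pi)$ or its reverse is order isomorphic to exactly one of: $(\mathbb Z,<)$ (if $\pi$ has neither a minimum nor a maximum), $(\mathbb N,<)$ (if exactly one extremum exists, the order being reversed if necessary so that it is a minimum), or $\{0,1,\dots,|\pi|-1\}$ (if both a minimum and a maximum exist; then $\pi$ is finite).
   Context: A sign vector on a set $E$ is an element of $\{+,-,0\}^E$; $-X$ is defined by $(-X)(e)=-X(e)$. The separator of $X,Y$ is $S(X,Y)=\{e\in E: X(e)\neq0\neq Y(e),\ X(e)\neq Y(e)\}$. The composition $X\circ Y$ is given by $(X\circ Y)(e)=X(e)$ if $X(e)\neq0$ and $Y(e)$ otherwise; $X\oplus Y$ is $0$ on $S(X,Y)$ and equals $X\circ Y$ elsewhere. For sets of sign vectors, $\mathcal A\circ\mathcal B=\{X\circ Y:X\in\mathcal A,Y\in\mathcal B\}$, $-\mathcal A=\{-X:X\in\mathcal A\}$. For $\mathcal L\subseteq\{+,-,0\}^E$ let $I_e(X,Y;\mathcal L)=\{Z\in\mathcal L:Z(e)=0,\ Z(f)=(X\circ Y)(f)\ \forall f\notin S(X,Y)\}$, $I(X,Y;\mathcal L)=\bigcup_{e\in S(X,Y)}I_e(X,Y;\mathcal L)$ and $\mathcal P(\mathcal L)=\{X\oplus(-Y):X,Y\in\mathcal L,\ I(X,-Y;\mathcal L)=I(-X,Y;\mathcal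 L)=\emptyset\}$. An affine oriented matroid (AOM) on an arbitrary set $E$ is a pair $(E,\mathcal L)$, $\mathcal L\subseteq\{+,-,0\}^E$, satisfying (FS) $\mathcal L\circ(-\mathcal L)\subseteq\mathcal L$; (SE) for all $X,Y\in\mathcal L$ and $e\in S(X,Y)$, $I_e(X,Y;\mathcal L)\ne\emptyset$; (P) $\mathcal P(\mathcal L)\circ\mathcal L\subseteq\mathcal L$. Elements $e,f\in E$ are equivalent if $X(e)=X(f)$ for all $X\in\mathcal L$, or $X(e)=-X(f)$ for all $X\in\mathcal L$; $e$ is redundant if $X(e)=Y(e)$ for all $X,Y\in\mathcal L$. The AOM is simple if it has no redundant elements and no two distinct equivalent elements. Two elements $e,f$ are parallel, $e\parallel f$, if there is no $X\in\mathcal L$ with $X(e)=X(f)=0$; in a simple AOM the reflexive closure of $\parallel$ is an equivalence relation whose classes are the parallelism classes. On a parallelism class $\pi$ the relation $[a,b,c]$ holds iff $a,b,c$ are pairwise distinct and for all $X,Z\in\mathcal L$, $X(a)=0$ and $Z(c)=0$ imply $X(b)=-Z(b)$; $<_\pi$ is the total order on $\pi$ (unique up to reversal) such that $[a,b,c]$ iff $a<_\pi b<_\pi c$ or $c<_\pi b<_\pi a$. *)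

From Stdlib Require Import ZArith List.

Inductive sign := Pos | Neg | Zer.

Definition sopp (s : sign) : sign :=
  match s with Pos => Neg | Neg => Pos | Zer => Zer end.

Section AOM.
Variable E : Type.

Definition signvec := E -> sign.
Definition svset := signvec -> Prop.

Definition svneg (X : signvec) : signvec := fun e => sopp (X e).

Definition sep (X Y : signvec) (e : E) : Prop :=
  X e <> Zer /\ Y e <> Zer /\ X e <> Y e.

Definition comp (X Y : signvec) : signvec :=
  fun e => match X e with Zer => Y e | s => s end.

Definition oplus (X Y : signvec) : signvec :=
  fun e => match X e, Y e with
           | Pos, Neg => Zer
           | Neg, Pos => Zer
           | Zer, t => t
           | s, _ => s
           end.

Definition Ie (L : svset) (X Y : signvec) (e : E) : svset :=
  fun Z => L Z /\ Z e = Zer /\ forall f, ~ sep X Y f -> Z f = comp X Y f.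

Definition Iset (L : svset) (X Y : signvec) : svset :=
  fun Z => exists e, sep X Y e /\ Ie L X Y e Z.

Definition Pset (L : svset) : svset :=
  fun W => exists X Y, L X /\ L Y /\
    (forall Z, ~ Iset L X (svneg Y) Z) /\
    (forall Z, ~ Iset L (svneg X) Y Z) /\
    W = oplus X (svneg Y).

Definition is_AOM (L : svset) : Prop :=
  (forall X Y, L X -> L Y -> L (comp X (svneg Y))) /\
  (forall X Y e, L X -> L Y -> sep X Y e -> exists Z, Ie L X Y e Z) /\
  (forall W X, Pset L W -> L X -> L (comp W X)).

Definition equivalent_elts (L : svset) (e f : E) : Prop :=
  (forall X, L X -> X e = X f) \/ (forall X, L X -> X e = sopp (X f)).

Definition redundant (L : svset) (e : E) : Prop :=
  forall X Y, L X -> L Y -> X e = Y e.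

Definition simple_AOM (L : svset) : Prop :=
  is_AOM L /\
  (forall e, ~ redundant L e) /\
  (forall e f, e <> f -> ~ equivalent_elts L e f).

Definition finite_separators (L : svset) : Prop :=
  forall X Y, L X -> L Y -> exists l : list E, forall e, sep X Y e -> In e l.

Definition parallel (L : svset) (e f : E) : Prop :=
  ~ exists X, L X /\ X e = Zer /\ X f = Zer.

Definition parallelism_class (L : svset) (pi : E -> Prop) : Prop :=
  exists e, forall f, pi f <-> (f = e \/ parallel L e f).

Definition between (L : svset) (a b c : E) : Prop :=
  a <> b /\ b <> c /\ a <> c /\
  forall X Z, L X -> L Z -> X a = Zer -> Z c = Zer -> X b = sopp (Z b).

Definition strict_total_on (pi : E -> Prop) (lt : E -> E -> Prop) : Prop :=
  (forall a, pi a -> ~ lt a a) /\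
  (forall a b c, pi a -> pi b -> pi c -> lt a b -> lt b c -> lt a c) /\
  (forall a b, pi a -> pi b -> a <> b -> lt a b \/ lt b a).

Definition is_pi_order (L : svset) (pi : E -> Prop) (lt : E -> E -> Prop) : Prop :=
  strict_total_on pi lt /\
  forall a b c, pi a -> pi b -> pi c ->
    (between L a b c <-> ((lt a b /\ lt b c) \/ (lt c b /\ lt b a))).

Definition has_min (pi : E -> Prop) (lt : E -> E -> Prop) : Prop :=
  exists m, pi m /\ forall x, pi x -> x <> m -> lt m x.

Definition has_max (pi : E -> Prop) (lt : E -> E -> Prop) : Prop :=
  exists m, pi m /\ forall x, pi x -> x <> m -> lt x m.

End AOM.

Definition order_iso {A B : Type} (ltA : A -> A -> Prop) (ltB : B -> B -> Prop) : Prop :=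
  exists f : A -> B,
    (forall x y, f x = f y -> x = y) /\
    (forall y, exists x, f x = y) /\
    (forall x y, ltA x y <-> ltB (f x) (f y)).

Definition sub_of {E : Type} (pi : E -> Prop) := { e : E | pi e }.
Definition restr {E : Type} (pi : E -> Prop) (lt : E -> E -> Prop) :
  sub_of pi -> sub_of pi -> Prop := fun a b => lt (proj1_sig a) (proj1_sig b).

Definition flip_rel {E : Type} (lt : E -> E -> Prop) : E -> E -> Prop :=
  fun a b => lt b a.

Definition fin_nat (n : nat) := { k : nat | k < n }.
Definition fin_lt (n : nat) : fin_nat n -> fin_nat n -> Prop :=
  fun a b => proj1_sig a < proj1_sig b.

From Stdlib Require Import ZArith List Classical ClassicalEpsilon Lia.
(* Imported last so that [between] refers to the betweenness of Defs. *)
From Pilot Require Import Defs.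

(* Call a strict total order on [pi] locally finite when every
   open interval (a, c) is contained in a finite list.  In such an order every
   element having something above it has an immediate successor, and every
   y > x is reached from x by finitely many successor steps (induction on the
   list covering (x, y), splitting the interval at its head).  Iterating the
   successor from the minimum, from the minimum up to the maximum, or in both
   directions from an arbitrary point then gives order isomorphisms with
   N, with {0, ..., n-1} and with Z respectively.

   In a simple AOM no vector vanishes on two distinct
   elements of a parallelism class (betweenness transfers zeros to the class
   representative).  Hence if a < b < c, X(a) = 0 and Z(c) = 0, then
   b lies in the separator S(X, Z); by (S) the interval (a, c) is finite, so
   the order <_pi is locally finite and the order theory applies. *)

Definition locally_finite {T : Type} (pi : T -> Prop) (R : T -> T -> Prop) : Prop :=
  forall a c, pi a -> pi c ->
    exists l : list T, forall b, pi b -> R a b -> R b c -> In b l.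

Lemma iso_of_monotone_surjection {T A : Type} (pi : T -> Prop) (R : T -> T -> Prop)
  (ltA : A -> A -> Prop) (h : A -> T) :
  strict_total_on T pi R ->
  (forall a b, ltA a b \/ a = b \/ ltA b a) ->
  (forall a, pi (h a)) ->
  (forall a b, ltA a b -> R (h a) (h b)) ->
  (forall y, pi y -> exists a, h a = y) ->
  order_iso (restr pi R) ltA.
Proof.
  intros [Hirr [Htr _]] Htri Hpi Hmono Hsurj.
  assert (Hrefl : forall a b, R (h a) (h b) -> ltA a b).
  { intros a b Hab. destruct (Htri a b) as [Hlt | [-> | Hgt]]; [exact Hlt | |].
    - exfalso; exact (Hirr _ (Hpi b) Hab).
    - exfalso; apply (Hirr _ (Hpi a)).
      exact (Htr _ _ _ (Hpi a) (Hpi b) (Hpi a) Hab (Hmono _ _ Hgt)). }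
  assert (Hinj : forall a b, h a = h b -> a = b).
  { intros a b Hab. destruct (Htri a b) as [Hlt | [Heq | Hgt]]; [| exact Heq |].
    - apply Hmono in Hlt. rewrite Hab in Hlt. exfalso; exact (Hirr _ (Hpi b) Hlt).
    - apply Hmono in Hgt. rewrite Hab in Hgt. exfalso; exact (Hirr _ (Hpi b) Hgt). }
  pose (g := fun y : sub_of pi =>
              proj1_sig (constructive_indefinite_description _ (Hsurj _ (proj2_sig y)))).
  assert (Hg : forall y, h (g y) = proj1_sig y)
    by (intro y; unfold g; destruct (constructive_indefinite_description _ _) as [a Ha];
        exact Ha).
  exists g. split; [| split].
  - intros x y Hxy. apply (@eq_sig_hprop T pi); [intros; apply proof_irrelevance |].
    rewrite <- !Hg, Hxy. reflexivity.
  - intro a. exists (exist pi (h a) (Hpi a)). apply Hinj. rewrite Hg. reflexivity.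
  - intros x y. unfold restr. rewrite <- (Hg x), <- (Hg y) at 1.
    split; [apply Hrefl | apply Hmono].
Qed.

Lemma flip_strict_total {T : Type} (pi : T -> Prop) (R : T -> T -> Prop) :
  strict_total_on T pi R -> strict_total_on T pi (flip_rel R).
Proof.
  intros [Hirr [Htr Htot]]. unfold flip_rel. split; [exact Hirr | split].
  - intros a b c pa pb pc Hba Hcb. exact (Htr c b a pc pb pa Hcb Hba).
  - intros a b pa pb Hab. destruct (Htot a b pa pb Hab); auto.
Qed.

Lemma flip_locally_finite {T : Type} (pi : T -> Prop) (R : T -> T -> Prop) :
  locally_finite pi R -> locally_finite pi (flip_rel R).
Proof.
  intros Hlf a c pa pc. destruct (Hlf c a pc pa) as [l Hl].
  exists l. intros b pb Hab Hbc. exact (Hl b pb Hbc Hab).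
Qed.

Lemma unbounded_of_no_max {T : Type} (pi : T -> Prop) (R : T -> T -> Prop) :
  strict_total_on T pi R -> ~ has_max T pi R ->
  forall x, pi x -> exists y, pi y /\ R x y.
Proof.
  intros [_ [_ Htot]] Hnomax x px. apply NNPP. intro Hnone. apply Hnomax.
  exists x. split; [exact px |]. intros z pz Hzx.
  destruct (Htot z x pz px Hzx) as [Hlt | Hgt]; [exact Hlt |].
  exfalso. apply Hnone. exists z. auto.
Qed.

Section LocallyFiniteOrder.

Variables (T : Type) (pi : T -> Prop) (R : T -> T -> Prop).
Hypothesis Hstrict : strict_total_on T pi R.

Definition covers (x s : T) : Prop :=
  pi s /\ R x s /\ forall z, pi z -> R x z -> ~ R z s.

(* A chosen immediate successor (meaningful only when one exists). *)
Definition succ (x : T) : T := epsilon (inhabits x) (covers x).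

Definition climbs (x : T) (n : nat) : Prop :=
  forall k, k < n -> covers (Nat.iter k succ x) (Nat.iter (S k) succ x).

Definition interval_in (l : list T) (x y : T) : Prop :=
  forall b, pi b -> R x b -> R b y -> In b l.

Lemma succ_covers x s : covers x s -> covers x (succ x).
Proof. intro Hs. unfold succ. apply epsilon_spec. exists s. exact Hs. Qed.

Lemma cover_below x s y : covers x s -> pi y -> R x y -> s = y \/ R s y.
Proof.
  intros [ps [Hxs Hmin]] py Hxy. destruct (classic (s = y)) as [-> | Hsy]; [left; reflexivity |].
  destruct Hstrict as [_ [_ Htot]].
  destruct (Htot s y ps py Hsy) as [Hlt | Hgt]; [right; exact Hlt |].
  exfalso. exact (Hmin y py Hxy Hgt).
Qed.

Lemma climbs_pi x n : pi x -> climbs x n -> forall k, k <= n -> pi (Nat.iter k succ x).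
Proof.
  intros px Hc [| k] Hk; [exact px |]. exact (proj1 (Hc k ltac:(lia))).
Qed.

Lemma climbs_mono x n : pi x -> climbs x n ->
  forall i j, i < j -> j <= n -> R (Nat.iter i succ x) (Nat.iter j succ x).
Proof.
  intros px Hc i j Hij. induction Hij as [| j Hij IH]; intro Hjn.
  - exact (proj1 (proj2 (Hc i ltac:(lia)))).
  - destruct Hstrict as [_ [Htr _]].
    apply (Htr _ (Nat.iter j succ x)); try (apply (climbs_pi x n); auto; lia).
    + apply IH; lia.
    + exact (proj1 (proj2 (Hc j ltac:(lia)))).
Qed.

Lemma climbs_add x n m : climbs x n -> climbs (Nat.iter n succ x) m -> climbs x (m + n).
Proof.
  intros Hn Hm k Hk. destruct (Nat.lt_ge_cases k n) as [Hlt | Hge]; [exact (Hn k Hlt) |].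
  replace k with ((k - n) + n) by lia. rewrite <- Nat.add_succ_l, !Nat.iter_add.
  apply Hm. lia.
Qed.

(* Every [y > x] is reached from [x] by a climb; induction on a list covering
   (x, y): either its head lies outside (x, y), or we split (x, y) at it. *)
Lemma reach_within l : forall x y, pi x -> pi y -> R x y -> interval_in l x y ->
  exists n, Nat.iter n succ x = y /\ climbs x n.
Proof.
  pose proof Hstrict as [Hirr [Htr _]].
  induction l as [| a l IH]; intros x y px py Hxy Hl.
  - assert (Hy : covers x y) by (split; [exact py | split; [exact Hxy |]];
                                 intros z pz Hxz Hzy; exact (Hl z pz Hxz Hzy)).
    pose proof (succ_covers x y Hy) as Hsucc.
    exists 1. split.
    + destruct (cover_below x (succ x) y Hsucc py Hxy) as [Heq | Hlt]; [exact Heq |].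
      destruct (Hl _ (proj1 Hsucc) (proj1 (proj2 Hsucc)) Hlt).
    + intros k Hk. replace k with 0 by lia. exact Hsucc.
  - destruct (classic (pi a /\ R x a /\ R a y)) as [[pa [Hxa Hay]] | Hout].
    + assert (Hleft : interval_in l x a).
      { intros b pb Hxb Hba.
        destruct (Hl b pb Hxb (Htr _ _ _ pb pa py Hba Hay)) as [-> | Hb]; [| exact Hb].
        exfalso; exact (Hirr b pb Hba). }
      assert (Hright : interval_in l a y).
      { intros b pb Hab Hby.
        destruct (Hl b pb (Htr _ _ _ px pa pb Hxa Hab) Hby) as [-> | Hb]; [| exact Hb].
        exfalso; exact (Hirr b pb Hab). }
      destruct (IH x a px pa Hxa Hleft) as [n [Hn Hcn]].
      destruct (IH a y pa py Hay Hright) as [m [Hm Hcm]].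
      exists (m + n). rewrite Nat.iter_add, Hn. split; [exact Hm |].
      apply climbs_add; [exact Hcn | rewrite Hn; exact Hcm].
    + apply IH; auto. intros b pb Hxb Hby.
      destruct (Hl b pb Hxb Hby) as [-> | Hb]; [| exact Hb].
      exfalso; exact (Hout (conj pb (conj Hxb Hby))).
Qed.

Hypothesis Hlf : locally_finite pi R.

Lemma reach x y : pi x -> pi y -> y = x \/ R x y ->
  exists n, Nat.iter n succ x = y /\ climbs x n.
Proof.
  intros px py [-> | Hxy].
  - exists 0. split; [reflexivity | intros k Hk; lia].
  - destruct (Hlf x y px py) as [l Hl]. exact (reach_within l x y px py Hxy Hl).
Qed.

Lemma succ_above x y : pi x -> pi y -> R x y -> covers x (succ x).
Proof.
  intros px py Hxy. destruct (reach x y px py (or_intror Hxy)) as [[| n] [Hn Hc]].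
  - simpl in Hn. subst y. exfalso; exact (proj1 Hstrict x px Hxy).
  - exact (Hc 0 ltac:(lia)).
Qed.

Lemma climbs_forever x : (forall z, pi z -> exists y, pi y /\ R z y) -> pi x ->
  forall n, climbs x n.
Proof.
  intros Hunb px n. induction n as [| n IH]; [intros k Hk; lia |].
  destruct (Hunb _ (climbs_pi x n px IH n (le_n n))) as [y [py Hy]].
  pose proof (succ_above _ y (climbs_pi x n px IH n (le_n n)) py Hy) as Hstep.
  intros k Hk. destruct (Nat.eq_dec k n) as [-> | Hkn]; [exact Hstep | apply IH; lia].
Qed.

Lemma above_min m y : (forall x, pi x -> x <> m -> R m x) -> pi y -> y = m \/ R m y.
Proof.
  intros Hmin py. destruct (classic (y = m)) as [-> | Hym]; [left | right; apply Hmin]; auto.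
Qed.

(* A minimum and no maximum: climbing from the minimum is an isomorphism with N. *)
Lemma iso_nat m : pi m -> (forall x, pi x -> x <> m -> R m x) ->
  (forall z, pi z -> exists y, pi y /\ R z y) ->
  order_iso (restr pi R) Nat.lt.
Proof.
  intros pm Hmin Hunb.
  pose proof (climbs_forever m Hunb pm) as Hc.
  apply (iso_of_monotone_surjection pi R Nat.lt (fun n => Nat.iter n succ m) Hstrict).
  - intros a b. lia.
  - intro n. exact (climbs_pi m n pm (Hc n) n (le_n n)).
  - intros a b Hab. exact (climbs_mono m b pm (Hc b) a b Hab (le_n b)).
  - intros y py. destruct (reach m y pm py (above_min m y Hmin py)) as [n [Hn _]].
    exists n. exact Hn.
Qed.

(* A minimum and a maximum: the climb from the minimum to the maximum
   enumerates [pi], which is isomorphic to {0, ..., n-1}. *)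
Lemma iso_fin m M : pi m -> (forall x, pi x -> x <> m -> R m x) ->
  pi M -> (forall x, pi x -> x <> M -> R x M) ->
  exists n, order_iso (restr pi R) (fin_lt n).
Proof.
  intros pm Hmin pM Hmax. pose proof Hstrict as [Hirr [Htr _]].
  destruct (reach m M pm pM (above_min m M Hmin pM)) as [N [HN Hc]].
  exists (S N).
  apply (iso_of_monotone_surjection pi R (fin_lt (S N))
           (fun k => Nat.iter (proj1_sig k) succ m) Hstrict).
  - intros [a Ha] [b Hb]. unfold fin_lt; simpl.
    destruct (Nat.lt_trichotomy a b) as [Hab | [-> | Hba]]; [left | right; left | right; right];
      auto.
    f_equal. apply proof_irrelevance.
  - intros [k Hk]. simpl. apply (climbs_pi m N pm Hc). lia.
  - intros [a Ha] [b Hb] Hab. unfold fin_lt in Hab. simpl in *.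
    apply (climbs_mono m N pm Hc); lia.
  - intros y py. destruct (reach m y pm py (above_min m y Hmin py)) as [k [Hk Hck]].
    assert (HkN : k < S N).
    { destruct (Nat.lt_ge_cases N k) as [HNk | HkN]; [exfalso | lia].
      pose proof (climbs_mono m k pm Hck N k HNk (le_n k)) as HMy. rewrite HN, Hk in HMy.
      destruct (classic (y = M)) as [-> | HyM]; [exact (Hirr M pM HMy) |].
      exact (Hirr y py (Htr _ _ _ py pM py (Hmax y py HyM) HMy)). }
    exists (exist _ k HkN). exact Hk.
Qed.

End LocallyFiniteOrder.

(* Neither minimum nor maximum: climbing up and climbing down from a point
   [x0] together give an isomorphism with Z. *)
Lemma iso_int {T : Type} (pi : T -> Prop) (R : T -> T -> Prop) (x0 : T) :
  strict_total_on T pi R -> locally_finite pi R -> pi x0 ->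
  (forall z, pi z -> exists y, pi y /\ R z y) ->
  (forall z, pi z -> exists y, pi y /\ R y z) ->
  order_iso (restr pi R) Z.lt.
Proof.
  intros Hst Hlf p0 Hup Hdown.
  pose proof (flip_strict_total pi R Hst) as Hst'.
  pose proof (flip_locally_finite pi R Hlf) as Hlf'.
  pose proof Hst as [Hirr [Htr Htot]].
  pose (up := fun n => Nat.iter n (succ T pi R) x0).
  pose (dn := fun n => Nat.iter n (succ T pi (flip_rel R)) x0).
  pose proof (climbs_forever T pi R Hst Hlf x0 Hup p0) as Hcu.
  pose proof (climbs_forever T pi (flip_rel R) Hst' Hlf' x0 Hdown p0) as Hcd.
  assert (pu : forall n, pi (up n)) by (intro n; exact (climbs_pi T pi R x0 n p0 (Hcu n) n (le_n n))).
  assert (pd : forall n, pi (dn n)) by (intro n; exact (climbs_pi T pi _ x0 n p0 (Hcd n) n (le_n n))).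
  assert (mu : forall i j, i < j -> R (up i) (up j))
    by (intros i j Hij; exact (climbs_mono T pi R Hst x0 j p0 (Hcu j) i j Hij (le_n j))).
  assert (md : forall i j, i < j -> R (dn j) (dn i))
    by (intros i j Hij; exact (climbs_mono T pi _ Hst' x0 j p0 (Hcd j) i j Hij (le_n j))).
  pose (h := fun z : Z => if Z.leb 0 z then up (Z.to_nat z) else dn (Z.to_nat (- z))).
  apply (iso_of_monotone_surjection pi R Z.lt h Hst).
  - intros a b. lia.
  - intro z. unfold h. destruct (Z.leb 0 z); auto.
  - intros a b Hab. unfold h.
    destruct (Z.leb_spec 0 a), (Z.leb_spec 0 b); try lia.
    + apply mu. lia.
    + destruct (Nat.eq_dec (Z.to_nat b) 0) as [Hb0 | Hb0].
      * rewrite Hb0. apply (md 0). lia.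
      * apply (Htr _ x0); auto; [apply (md 0) | apply (mu 0)]; lia.
    + apply md. lia.
  - intros y py. destruct (classic (y = x0)) as [-> | Hy]; [exists 0%Z; reflexivity |].
    destruct (Htot y x0 py p0 Hy) as [Hyx | Hxy].
    + destruct (reach T pi (flip_rel R) Hst' Hlf' x0 y p0 py (or_intror Hyx)) as [n [Hn _]].
      exists (- Z.of_nat n)%Z. unfold h. destruct (Z.leb_spec 0 (- Z.of_nat n)).
      * replace n with 0 in Hn by lia. symmetry in Hn. contradiction.
      * rewrite Z.opp_involutive, Nat2Z.id. exact Hn.
    + destruct (reach T pi R Hst Hlf x0 y p0 py (or_intror Hxy)) as [n [Hn _]].
      exists (Z.of_nat n). unfold h. destruct (Z.leb_spec 0 (Z.of_nat n)); [| lia].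
      rewrite Nat2Z.id. exact Hn.
Qed.

(* In an AOM, a non-redundant element is a zero of some vector: two vectors
   differing at [e] can be eliminated at [e] by (SE). *)
Lemma zero_somewhere (E : Type) (L : svset E) (e : E) :
  is_AOM E L -> ~ redundant E L e -> exists X, L X /\ X e = Zer.
Proof.
  intros [_ [HSE _]] Hnr. apply NNPP. intro Hnone. apply Hnr. intros X Y LX LY.
  apply NNPP. intro Hne.
  assert (Xe : X e <> Zer) by (intro; apply Hnone; exists X; auto).
  assert (Ye : Y e <> Zer) by (intro; apply Hnone; exists Y; auto).
  destruct (HSE X Y e LX LY (conj Xe (conj Ye Hne))) as [Z [LZ [Ze _]]].
  apply Hnone. exists Z. auto.
Qed.

Lemma between_zero_transfer (E : Type) (L : svset E) (a b c : E) (X Z : signvec E) :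
  between E L a b c -> L X -> L Z -> X a = Zer -> Z c = Zer -> Z b = Zer -> X b = Zer.
Proof.
  intros [_ [_ [_ Hb]]] LX LZ Xa Zc Zb. rewrite (Hb X Z LX LZ Xa Zc), Zb. reflexivity.
Qed.

Lemma between_zero_middle (E : Type) (L : svset E) (a b c : E) (X : signvec E) :
  between E L a b c -> L X -> X a = Zer -> X c = Zer -> X b = Zer.
Proof.
  intros [_ [_ [_ Hb]]] LX Xa Xc. specialize (Hb X X LX LX Xa Xc).
  destruct (X b); simpl in Hb; congruence.
Qed.

Lemma middle_of_three (E : Type) (L : svset E) (pi : E -> Prop) (lt : E -> E -> Prop)
  (a b c : E) :
  is_pi_order E L pi lt -> pi a -> pi b -> pi c -> a <> b -> b <> c -> a <> c ->
  between E L a b c \/ between E L b a c \/ between E L a c b.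
Proof.
  intros [[_ [_ Htot]] Hbw] pa pb pc Hab Hbc Hac.
  rewrite (Hbw a b c), (Hbw b a c), (Hbw a c b) by assumption.
  destruct (Htot a b pa pb Hab), (Htot b c pb pc Hbc), (Htot a c pa pc Hac); tauto.
Qed.

(* In a simple AOM no vector vanishes on two distinct elements of a
   parallelism class: the zero would propagate to the representative e0,
   which is parallel to every other element of the class. *)
Lemma no_common_zero (E : Type) (L : svset E) (pi : E -> Prop) (lt : E -> E -> Prop)
  (e0 p q : E) (X : signvec E) :
  simple_AOM E L -> is_pi_order E L pi lt ->
  (forall f, pi f <-> f = e0 \/ parallel E L e0 f) ->
  pi p -> pi q -> p <> q -> L X -> X p = Zer -> X q = Zer -> False.
Proof.
  intros [HA [Hnr _]] HPO Hcls pp pq Hpq LX Xp Xq.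
  assert (Hrep : forall Y f, pi f -> f <> e0 -> L Y -> Y e0 = Zer -> Y f = Zer -> False).
  { intros Y f pf Hf LY Ye Yf. destruct (proj1 (Hcls f) pf) as [Hfe | Hpar]; [exact (Hf Hfe) |].
    apply Hpar. exists Y. auto. }
  destruct (classic (p = e0)) as [-> | Hp]; [exact (Hrep X q pq (not_eq_sym Hpq) LX Xp Xq) |].
  destruct (classic (q = e0)) as [-> | Hq]; [exact (Hrep X p pp Hpq LX Xq Xp) |].
  assert (pe0 : pi e0) by (apply Hcls; left; reflexivity).
  destruct (zero_somewhere E L e0 HA (Hnr e0)) as [X0 [LX0 X0e]].
  destruct (middle_of_three E L pi lt e0 p q HPO pe0 pp pq (not_eq_sym Hp) Hpq (not_eq_sym Hq))
    as [Hb | [Hb | Hb]].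
  - exact (Hrep X0 p pp Hp LX0 X0e (between_zero_transfer E L e0 p q X0 X Hb LX0 LX X0e Xq Xp)).
  - exact (Hrep X q pq Hq LX (between_zero_middle E L p e0 q X Hb LX Xp Xq) Xq).
  - exact (Hrep X0 q pq Hq LX0 X0e (between_zero_transfer E L e0 q p X0 X Hb LX0 LX X0e Xp Xq)).
Qed.

(* If a < b < c in the class, X(a) = 0 and Z(c) = 0, then b separates X and Z:
   X(b) = -Z(b) by betweenness, and Z(b) <> 0 since Z(c) = 0. *)
Lemma between_in_separator (E : Type) (L : svset E) (pi : E -> Prop) (lt : E -> E -> Prop)
  (e0 a b c : E) (X Z : signvec E) :
  simple_AOM E L -> is_pi_order E L pi lt ->
  (forall f, pi f <-> f = e0 \/ parallel E L e0 f) ->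
  pi a -> pi b -> pi c -> lt a b -> lt b c -> L X -> L Z -> X a = Zer -> Z c = Zer ->
  sep E X Z b.
Proof.
  intros HS HPO Hcls pa pb pc Hab Hbc LX LZ Xa Zc.
  destruct (proj2 (proj2 HPO a b c pa pb pc) (or_introl (conj Hab Hbc))) as [_ [Hbc' [_ Hb]]].
  unfold sep. rewrite (Hb X Z LX LZ Xa Zc).
  assert (Zb : Z b <> Zer) by (intro Zb; exact (no_common_zero E L pi lt e0 b c Z HS HPO Hcls
                                                  pb pc Hbc' LZ Zb Zc)).
  destruct (Z b); simpl; repeat split; congruence.
Qed.

(* Under (S) the order of a parallelism class is locally finite: an open
   interval (a, c) lies in the finite separator S(X, Z) of zeros X of a and Z of c. *)
Lemma parallelism_class_locally_finite (E : Type) (L : svset E) (pi : E -> Prop)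
  (lt : E -> E -> Prop) :
  simple_AOM E L -> finite_separators E L -> parallelism_class E L pi ->
  is_pi_order E L pi lt -> locally_finite pi lt.
Proof.
  intros HS HFS [e0 Hcls] HPO a c pa pc.
  destruct HS as [HA [Hnr Hne]].
  destruct (zero_somewhere E L a HA (Hnr a)) as [X [LX Xa]].
  destruct (zero_somewhere E L c HA (Hnr c)) as [Z [LZ Zc]].
  destruct (HFS X Z LX LZ) as [l Hl]. exists l. intros b pb Hab Hbc.
  apply Hl. exact (between_in_separator E L pi lt e0 a b c X Z (conj HA (conj Hnr Hne)) HPO
                     Hcls pa pb pc Hab Hbc LX LZ Xa Zc).
Qed.

Theorem lemma3p13 (E : Type) (L : svset E) (pi : E -> Prop) (lt : E -> E -> Prop) :
  simple_AOM E L ->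
  finite_separators E L ->
  parallelism_class E L pi ->
  is_pi_order E L pi lt ->
  (* neither minimum nor maximum: (Z,<) *)
  ((~ has_min E pi lt /\ ~ has_max E pi lt) ->
     order_iso (restr pi lt) Z.lt \/ order_iso (restr pi (flip_rel lt)) Z.lt) /\
  (* exactly one extremum: (N,<), reversed if necessary *)
  ((has_min E pi lt /\ ~ has_max E pi lt) \/ (~ has_min E pi lt /\ has_max E pi lt) ->
     order_iso (restr pi lt) Nat.lt \/ order_iso (restr pi (flip_rel lt)) Nat.lt) /\
  (* both minimum and maximum: pi finite, ({0,...,|pi|-1},<) *)
  ((has_min E pi lt /\ has_max E pi lt) ->
     exists n : nat,
       order_iso (restr pi lt) (fin_lt n) \/ order_iso (restr pi (flip_rel lt)) (fin_lt n)).
Proof.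
  intros HS HFS Hcl HPO.
  pose proof (parallelism_class_locally_finite E L pi lt HS HFS Hcl HPO) as Hlf.
  pose proof (proj1 HPO) as Hst.
  pose proof (flip_strict_total pi lt Hst) as Hst'.
  pose proof (flip_locally_finite pi lt Hlf) as Hlf'.
  split; [| split].
  - intros [Hnomin Hnomax]. left. destruct Hcl as [e0 Hcls].
    apply (iso_int pi lt e0 Hst Hlf).
    + apply Hcls. left. reflexivity.
    + exact (unbounded_of_no_max pi lt Hst Hnomax).
    + exact (unbounded_of_no_max pi (flip_rel lt) Hst' Hnomin).
  - intros [[[m [pm Hm]] Hnomax] | [Hnomin [M [pM HM]]]].
    + left. exact (iso_nat E pi lt Hst Hlf m pm Hm (unbounded_of_no_max pi lt Hst Hnomax)).
    + (* the maximum of [lt] is the minimum of the reversed order *)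
      right. exact (iso_nat E pi (flip_rel lt) Hst' Hlf' M pM HM
                      (unbounded_of_no_max pi (flip_rel lt) Hst' Hnomin)).
  - intros [[m [pm Hm]] [M [pM HM]]].
    destruct (iso_fin E pi lt Hst Hlf m M pm Hm pM HM) as [n Hn].
    exists n. left. exact Hn.
Qed.
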